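(* Let $\ell>0$, $M=\mathbb R\times\{x\in\mathbb R^2:|x|<\ell\}$ with coordinates $(t,x^1,x^2)$, $\lambda(x)=\log\frac{2}{1-|x|^2/\ell^2}$ and $\kappa=-\lambda$. Take the Newton-Cartan background $$\tau_\mu dx^\mu=e^{\kappa}dt,\qquad e_\mu{}^adx^\mu=e^{\lambda}dx^a,\qquad m_\mu dx^\mu=\phi\, e^{\kappa}dt\ \text{ with }\ \phi=e^{-\kappa}$$ (so $m_\mu dx^\mu=dt$), and background fields $u=0$, $v=0$, and $v_\mu$ determined by $v_0=0$, $(v^1,v^2)=-\tfrac32\big(x^2/\ell^2,\,-x^1/\ell^2\big)$. Then the system (S$_+$) of Theorem 2 has two linearly independent nowhere-vanishing solutions, namely $\zeta_+=\exp\!\big(\tfrac{\kappa}{2}+\tfrac{\pi}{8}\gamma_0\big)\zeta_0$ for any constant Majorana spinor $\zeta_0\neq0$. Moreover, for this background the boost connection $\omega_\mu{}^a$ vanishes identically.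
   Context: Conventions: $\tau^\mu,e^\mu{}_a$ are the projective inverses ($\tau^\mu\tau_\mu=1$, $\tau^\mu e_\mu{}^a=0$, $e^\mu{}_a\tau_\mu=0$, $e^\mu{}_ae_\mu{}^b=\delta^b_a$); $v_0=\tau^\mu v_\mu$, $v_a=e^\mu{}_av_\mu$, $v^a=v_a$. $\epsilon_{12}=\epsilon^{12}=1$. $\tau_{\mu\nu}=2\partial_{[\mu}\tau_{\nu]}$, $\tau_{ab}=e^\mu{}_ae^\nu{}_b\tau_{\mu\nu}$, $\tau_{0a}=\tau^\mu e^\nu{}_a\tau_{\mu\nu}$, $\tau_{0\mu}=\tau^\nu\tau_{\nu\mu}$, $\tau^{a0}=\tau_{0a}$. Spin connections: $\omega_\mu{}^a = e^{\nu a}\partial_{[\mu}m_{\nu]} - e_\mu{}^be^{\nu a}\tau^\rho\partial_{[\nu}e_{\rho]b} - \tau^\nu\partial_{[\mu}e_{\nu]}{}^a - \tau_\mu e^{\nu a}\tau^\rho\partial_{[\nu}m_{\rho]}$, $\omega_\mu{}^{ab} = 2e^{\nu[a}\partial_{[\mu}e_{\nu]}{}^{b]} - e_\mu{}^ce^{\nu a}e^{\rho b}\partial_{[\nu}e_{\rho]c} - \tau_\mu e^{\nu a}e^{\rho b}\partial_{[\nu}m_{\rho]}$. Gamma matrices: $2\times2$, $\gamma_0^2=-\mathbb1$, $\{\gamma_a,\gamma_b\}=2\delta_{ab}$, $\{\gamma_0,\gamma_a\}=0$, $\gamma^a=\gamma_a$, $\gamma^0=-\gamma_0$, $\gamma_{ab}=\epsilon_{ab}\gamma_0$,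 $\gamma_{a0}=\epsilon_{ab}\gamma_b$; Majorana: $\zeta^*=\mathrm i\mathcal C_3\gamma^0\zeta$ with $\mathcal C_3^T=-\mathcal C_3$, $\gamma^T=-\mathcal C_3\gamma\mathcal C_3^{-1}$. $D_\mu\zeta=\partial_\mu\zeta+\tfrac14\omega_\mu{}^{ab}\gamma_{ab}\zeta$. System (S$_+$) for a commuting Majorana spinor $\zeta_+$: $(4v+\epsilon^{ab}\tau_{ab})\gamma_0\zeta_+=0$; $(\tfrac32\tau^{a0}\gamma_{a0}-\gamma^av_a+\mathrm{Re}(u)\gamma_0-\mathrm{Im}(u))\zeta_+=0$; $(\omega_\mu{}^a\gamma_{a0}+\tfrac13e_\mu{}^av_0\gamma_a)\zeta_+=0$; $D_\mu\zeta_+=(-\tfrac14\tau_{0\mu}-\tfrac12v_\mu\gamma_0+\tfrac16e_\mu{}^av^b\gamma_a\gamma_b\gamma_0+\tfrac13\tau_\mu v_0\gamma_0-\tfrac16\mathrm{Re}(u)e_\mu{}^a\gamma_a-\tfrac16\mathrm{Im}(u)e_\mu{}^a\gamma_{a0})\zeta_+$. *)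

From Stdlib Require Import Reals Lra.
From Coquelicot Require Import Coquelicot.
Open Scope R_scope.

Definition pt := (R * R * R)%type.
Definition coord (p : pt) (mu : nat) : R :=
  match mu with 0%nat => fst (fst p) | 1%nat => snd (fst p) | _ => snd p end.
Definition upd (p : pt) (mu : nat) (s : R) : pt :=
  match mu with
  | 0%nat => (s, snd (fst p), snd p)
  | 1%nat => (fst (fst p), s, snd p)
  | _ => (fst (fst p), snd (fst p), s) end.
Definition pd (mu : nat) (f : pt -> R) (p : pt) : R :=
  Derive (fun s => f (upd p mu s)) (coord p mu).

(* spacetime indices mu in {0,1,2}; frame (spatial) indices a in {1,2} *)
Definition sumM (f : nat -> R) : R := f 0%nat + f 1%nat + f 2%nat.
Definition sumF (f : nat -> R) : R := f 1%nat + f 2%nat.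
Definition delta (a b : nat) : R := if Nat.eqb a b then 1 else 0.
(* epsilon_{12} = epsilon^{12} = 1 *)
Definition eps (a b : nat) : R :=
  match a, b with 1%nat, 2%nat => 1 | 2%nat, 1%nat => -1 | _, _ => 0 end.

Definition Sp := (C * C)%type.
Record Mat := mkMat { m11 : C; m12 : C; m21 : C; m22 : C }.
Definition mapply (A : Mat) (z : Sp) : Sp :=
  (Cplus (Cmult (m11 A) (fst z)) (Cmult (m12 A) (snd z)),
   Cplus (Cmult (m21 A) (fst z)) (Cmult (m22 A) (snd z))).
Definition mmul (A B : Mat) : Mat :=
  mkMat (Cplus (Cmult (m11 A) (m11 B)) (Cmult (m12 A) (m21 B)))
        (Cplus (Cmult (m11 A) (m12 B)) (Cmult (m12 A) (m22 B)))
        (Cplus (Cmult (m21 A) (m11 B)) (Cmult (m22 A) (m21 B)))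
        (Cplus (Cmult (m21 A) (m12 B)) (Cmult (m22 A) (m22 B))).
Definition madd (A B : Mat) : Mat :=
  mkMat (Cplus (m11 A) (m11 B)) (Cplus (m12 A) (m12 B))
        (Cplus (m21 A) (m21 B)) (Cplus (m22 A) (m22 B)).
Definition mscal (c : C) (A : Mat) : Mat :=
  mkMat (Cmult c (m11 A)) (Cmult c (m12 A)) (Cmult c (m21 A)) (Cmult c (m22 A)).
Definition rscal (r : R) (A : Mat) : Mat := mscal (RtoC r) A.
Definition mzero : Mat := mkMat (RtoC 0) (RtoC 0) (RtoC 0) (RtoC 0).
Definition mid : Mat := mkMat (RtoC 1) (RtoC 0) (RtoC 0) (RtoC 1).
Definition spzero : Sp := (RtoC 0, RtoC 0).
Definition spadd (z w : Sp) : Sp := (Cplus (fst z) (fst w), Cplus (snd z) (snd w)).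
Definition spscal (r : R) (z : Sp) : Sp := (Cmult (RtoC r) (fst z), Cmult (RtoC r) (snd z)).
Definition spconj (z : Sp) : Sp := (Cconj (fst z), Cconj (snd z)).
Definition msumM (f : nat -> Mat) : Mat := madd (madd (f 0%nat) (f 1%nat)) (f 2%nat).
Definition msumF (f : nat -> Mat) : Mat := madd (f 1%nat) (f 2%nat).

(* ---------- Gamma matrices (a concrete real representation) ----------
   gamma_1 = sigma_3, gamma_2 = sigma_1, gamma_0 = gamma_1 gamma_2 = [[0,1],[-1,0]].
   They satisfy gamma_0^2 = -1, {gamma_a,gamma_b} = 2 delta_ab, {gamma_0,gamma_a} = 0,
   gamma_{ab} = eps_ab gamma_0, gamma_{a0} = eps_ab gamma_b. *)
Definition gam (A : nat) : Mat :=
  match A with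
  | 0%nat => mkMat (RtoC 0) (RtoC 1) (RtoC (-1)) (RtoC 0)
  | 1%nat => mkMat (RtoC 1) (RtoC 0) (RtoC 0) (RtoC (-1))
  | _ => mkMat (RtoC 0) (RtoC 1) (RtoC 1) (RtoC 0) end.
Definition gamUp (A : nat) : Mat :=
  match A with 0%nat => rscal (-1) (gam 0%nat) | _ => gam A end.
Definition gam2 (A B : nat) : Mat :=
  rscal (1/2) (madd (mmul (gam A) (gam B)) (rscal (-1) (mmul (gam B) (gam A)))).
(* charge conjugation matrix: C_3 = -i eps, with C_3^T = -C_3 and gamma^T = -C_3 gamma C_3^{-1} *)
Definition C3 : Mat := mkMat (RtoC 0) (Copp Ci) Ci (RtoC 0).
Definition majorana (z : Sp) : Prop :=
  spconj z = mapply (mscal Ci (mmul C3 (gamUp 0%nat))) z.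

Definition pdC (mu : nat) (f : pt -> C) (p : pt) : C :=
  (pd mu (fun q => fst (f q)) p, pd mu (fun q => snd (f q)) p).
Definition pdSp (mu : nat) (z : pt -> Sp) (p : pt) : Sp :=
  (pdC mu (fun q => fst (z q)) p, pdC mu (fun q => snd (z q)) p).

(* ---------- Newton-Cartan geometry ----------
   tau mu = tau_mu,  e mu a = e_mu^a,  m mu = m_mu,
   tauI mu = tau^mu, eI mu a = e^mu_a (projective inverses). *)
Section NC.
Variables (tau : pt -> nat -> R) (e : pt -> nat -> nat -> R) (m : pt -> nat -> R)
          (tauI : pt -> nat -> R) (eI : pt -> nat -> nat -> R).

Definition projective_inverse (p : pt) : Prop :=
  sumM (fun mu => tauI p mu * tau p mu) = 1 /\
  (forall a, (a = 1 \/ a = 2)%nat -> sumM (fun mu => tauI p mu * e p mu a) = 0) /\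
  (forall a, (a = 1 \/ a = 2)%nat -> sumM (fun mu => eI p mu a * tau p mu) = 0) /\
  (forall a b, (a = 1 \/ a = 2)%nat -> (b = 1 \/ b = 2)%nat ->
     sumM (fun mu => eI p mu a * e p mu b) = delta a b).

Definition dAm (p : pt) (mu nu : nat) : R :=
  (pd mu (fun q => m q nu) p - pd nu (fun q => m q mu) p) / 2.
Definition dAe (p : pt) (b mu nu : nat) : R :=
  (pd mu (fun q => e q nu b) p - pd nu (fun q => e q mu b) p) / 2.
Definition dAtau (p : pt) (mu nu : nat) : R :=
  (pd mu (fun q => tau q nu) p - pd nu (fun q => tau q mu) p) / 2.

Definition tauF (p : pt) (mu nu : nat) : R := 2 * dAtau p mu nu.
Definition tauFF (p : pt) (a b : nat) : R :=
  sumM (fun mu => sumM (fun nu => eI p mu a * eI p nu b * tauF p mu nu)).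
(* tau_{0a} = tau^{a0} *)
Definition tau0F (p : pt) (a : nat) : R :=
  sumM (fun mu => sumM (fun nu => tauI p mu * eI p nu a * tauF p mu nu)).
Definition tau0M (p : pt) (mu : nat) : R := sumM (fun nu => tauI p nu * tauF p nu mu).

Definition omega1 (p : pt) (mu a : nat) : R :=
  sumM (fun nu => eI p nu a * dAm p mu nu)
  - sumF (fun b => sumM (fun nu => sumM (fun rho =>
        e p mu b * eI p nu a * tauI p rho * dAe p b nu rho)))
  - sumM (fun nu => tauI p nu * dAe p a mu nu)
  - tau p mu * sumM (fun nu => sumM (fun rho => eI p nu a * tauI p rho * dAm p nu rho)).

Definition omega2 (p : pt) (mu a b : nat) : R :=
  sumM (fun nu => eI p nu a * dAe p b mu nu - eI p nu b * dAe p a mu nu)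
  - sumF (fun c => sumM (fun nu => sumM (fun rho =>
        e p mu c * eI p nu a * eI p rho b * dAe p c nu rho)))
  - tau p mu * sumM (fun nu => sumM (fun rho => eI p nu a * eI p rho b * dAm p nu rho)).

Definition Dcov (z : pt -> Sp) (p : pt) (mu : nat) : Sp :=
  spadd (pdSp mu z p)
    (mapply (rscal (1/4) (msumF (fun a => msumF (fun b => rscal (omega2 p mu a b) (gam2 a b)))))
            (z p)).

Definition Splus (v : pt -> R) (u : pt -> C) (vv : pt -> nat -> R)
           (z : pt -> Sp) (p : pt) : Prop :=
  let v0 := sumM (fun mu => tauI p mu * vv p mu) in
  let vF := fun a => sumM (fun mu => eI p mu a * vv p mu) in
  mapply (rscal (4 * v p + sumF (fun a => sumF (fun b => eps a b * tauFF p a b))) (gam 0%nat)) (z p)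
    = spzero /\
  mapply (madd (madd (madd
      (rscal (3/2) (msumF (fun a => rscal (tau0F p a) (gam2 a 0%nat))))
      (rscal (-1) (msumF (fun a => rscal (vF a) (gamUp a)))))
      (rscal (fst (u p)) (gam 0%nat)))
      (rscal (- snd (u p)) mid)) (z p) = spzero /\
  (forall mu, (mu <= 2)%nat ->
     mapply (madd (msumF (fun a => rscal (omega1 p mu a) (gam2 a 0%nat)))
                  (msumF (fun a => rscal (1/3 * e p mu a * v0) (gam a)))) (z p) = spzero) /\
  (forall mu, (mu <= 2)%nat ->
     Dcov z p mu =
     mapply (madd (madd (madd (madd (madd
       (rscal (-1/4 * tau0M p mu) mid)
       (rscal (-1/2 * vv p mu) (gam 0%nat)))
       (msumF (fun a => msumF (fun b =>
          rscal (1/6 * e p mu a * vF b) (mmul (mmul (gam a) (gam b)) (gam 0%nat))))))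
       (rscal (1/3 * tau p mu * v0) (gam 0%nat)))
       (rscal (-1/6 * fst (u p)) (msumF (fun a => rscal (e p mu a) (gam a)))))
       (rscal (-1/6 * snd (u p)) (msumF (fun a => rscal (e p mu a) (gam2 a 0%nat)))))
       (z p)).

End NC.

Definition rsq (p : pt) : R := coord p 1 ^ 2 + coord p 2 ^ 2.
Definition inM (l : R) (p : pt) : Prop := rsq p < l ^ 2.
Definition lam (l : R) (p : pt) : R := ln (2 / (1 - rsq p / l ^ 2)).
Definition kap (l : R) (p : pt) : R := - lam l p.
Definition phiB (l : R) (p : pt) : R := exp (- kap l p).
Definition tauB (l : R) (p : pt) (mu : nat) : R :=
  match mu with 0%nat => exp (kap l p) | _ => 0 end.
Definition eB (l : R) (p : pt) (mu a : nat) : R :=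
  if ((1 <=? mu)%nat && (mu <=? 2)%nat && Nat.eqb mu a)%bool then exp (lam l p) else 0.
Definition mB (l : R) (p : pt) (mu : nat) : R :=
  match mu with 0%nat => phiB l p * exp (kap l p) | _ => 0 end.
Definition uB (p : pt) : C := RtoC 0.
Definition vB (p : pt) : R := 0.
Definition vFB (l : R) (p : pt) (a : nat) : R :=
  match a with
  | 1%nat => -3/2 * (coord p 2 / l ^ 2)
  | 2%nat => -3/2 * (- coord p 1 / l ^ 2)
  | _ => 0 end.

(* exp(alpha 1 + beta gamma_0) = e^alpha (cos beta 1 + sin beta gamma_0), since gamma_0^2 = -1
   and 1 commutes with gamma_0 *)
Definition expG (alpha beta : R) : Mat :=
  rscal (exp alpha) (madd (rscal (cos beta) mid) (rscal (sin beta) (gam 0%nat))).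

Definition zetaPlus (l : R) (z0 : Sp) (p : pt) : Sp :=
  mapply (expG (kap l p / 2) (PI / 8)) z0.

(* The proof is a direct
   computation organised in four layers.
   1. Spinor algebra: all gamma matrices are real, so 2x2 matrices with real entries
      ('rM') and the explicit spinor operations reduce every spinor identity to
      arithmetic on real components.
   2. Calculus of the background: d_mu lambda = e^lambda x^mu / l^2 (spatial mu), from
      which d e = e dlambda, d tau = -tau dlambda and d m = 0.
   3. Geometry: the projective inverses and v_mu are forced by the hypotheses; feeding
      them in, the boost connection vanishes, omega_mu^{ab} = 2 delta_mu^[a d^b] lambda,
      tau_{ab} = 0, tau_{0a} = x^a / l^2 and tau_{0 mu} = d_mu lambda.
   4. Spinors: every field e^{kappa/2} c with c constant solves (S+); the three
      algebraic equations hold because their matrices vanish and the differential one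
      because d_mu e^{kappa/2} = -(1/2) d_mu lambda e^{kappa/2}.  Finally
      zeta_+ = e^{kappa/2} exp(pi/8 gamma_0) zeta_0 is of this form, exp(alpha + beta
      gamma_0) is real and invertible, which gives reality (Majorana), non-vanishing
      and linear independence. *)

From Stdlib Require Import Reals Lra Lia.
From Coquelicot Require Import Coquelicot.
Open Scope R_scope.

Definition rM (x y z w : R) : Mat := mkMat (RtoC x) (RtoC y) (RtoC z) (RtoC w).

Lemma madd_rM a b c d a' b' c' d' :
  madd (rM a b c d) (rM a' b' c' d') = rM (a + a') (b + b') (c + c') (d + d').
Proof. unfold madd, rM; cbn [m11 m12 m21 m22]; now rewrite <- !RtoC_plus. Qed.

Lemma rscal_rM r a b c d : rscal r (rM a b c d) = rM (r * a) (r * b) (r * c) (r * d).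
Proof. unfold rscal, mscal, rM; cbn [m11 m12 m21 m22]; now rewrite <- !RtoC_mult. Qed.

Lemma mmul_rM a b c d a' b' c' d' :
  mmul (rM a b c d) (rM a' b' c' d') =
  rM (a * a' + b * c') (a * b' + b * d') (c * a' + d * c') (c * b' + d * d').
Proof. unfold mmul, rM; cbn [m11 m12 m21 m22]; now rewrite <- !RtoC_mult, <- !RtoC_plus. Qed.

Lemma mapply_rM x y z w a b c d :
  mapply (rM x y z w) ((a, b), (c, d)) =
  ((x * a + y * c, x * b + y * d), (z * a + w * c, z * b + w * d)).
Proof.
  unfold mapply, rM, Cplus, Cmult, RtoC; cbn [fst snd m11 m12 m21 m22].
  f_equal; apply injective_projections; cbn [fst snd]; ring.
Qed.

Lemma gam0_rM : gam 0 = rM 0 1 (-1) 0. Proof. reflexivity. Qed.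
Lemma gam1_rM : gam 1 = rM 1 0 0 (-1). Proof. reflexivity. Qed.
Lemma gam2_rM : gam 2 = rM 0 1 1 0. Proof. reflexivity. Qed.
Lemma mid_rM : mid = rM 1 0 0 1. Proof. reflexivity. Qed.

Ltac to_rM :=
  repeat rewrite ?gam0_rM, ?gam1_rM, ?gam2_rM, ?mid_rM, ?madd_rM, ?rscal_rM, ?mmul_rM.

Lemma gam2_explicit :
  gam2 1 0 = rM 0 1 1 0 /\ gam2 2 0 = rM (-1) 0 0 1 /\
  gam2 1 2 = rM 0 1 (-1) 0 /\ gam2 2 1 = rM 0 (-1) 1 0 /\
  gam2 1 1 = rM 0 0 0 0 /\ gam2 2 2 = rM 0 0 0 0.
Proof. unfold gam2; to_rM; repeat split; f_equal; field. Qed.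

Lemma spadd_pair a b c d a' b' c' d' :
  spadd ((a, b), (c, d)) ((a', b'), (c', d')) = ((a + a', b + b'), (c + c', d + d')).
Proof. reflexivity. Qed.

Lemma spscal_pair r a b c d : spscal r ((a, b), (c, d)) = ((r * a, r * b), (r * c, r * d)).
Proof.
  unfold spscal, Cmult, RtoC; cbn [fst snd].
  f_equal; apply injective_projections; cbn [fst snd]; ring.
Qed.

Lemma spscal_mult r s z : spscal (r * s) z = spscal r (spscal s z).
Proof. destruct z as [[a b] [c d]]; rewrite !spscal_pair; f_equal; f_equal; ring. Qed.

Ltac spinor_components z :=
  destruct gam2_explicit as (g10 & g20 & g12 & g21 & g11 & g22);
  unfold msumF; cbn [gamUp fst snd RtoC];
  rewrite ?g10, ?g20, ?g12, ?g21, ?g11, ?g22; to_rM;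
  destruct z as [[s1 s2] [s3 s4]];
  rewrite ?mapply_rM, ?spscal_pair, ?spadd_pair; unfold spzero, RtoC; f_equal; f_equal.

(* In this representation C_3 gamma^0 = -i, so the Majorana spinors are the real ones. *)
Lemma majorana_iff z : majorana z <-> snd (fst z) = 0 /\ snd (snd z) = 0.
Proof.
  destruct z as [[a b] [c d]].
  cbv [majorana spconj mapply mscal mmul C3 gamUp rscal gam Cconj Ci Cplus Cmult RtoC Copp
       fst snd m11 m12 m21 m22].
  split.
  - intros Heq; injection Heq; intros; lra.
  - intros [-> ->]; f_equal; f_equal; ring.
Qed.

Lemma expG_rM a b :
  expG a b = rM (exp a * cos b) (exp a * sin b) (- (exp a * sin b)) (exp a * cos b).
Proof. unfold expG; to_rM; f_equal; ring. Qed.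

Lemma expG_inverse a b : mmul (expG (- a) (- b)) (expG a b) = mid.
Proof.
  rewrite !expG_rM, mmul_rM, mid_rM, cos_neg, sin_neg, exp_Ropp.
  pose proof (sin2_cos2 b) as Hsc; unfold Rsqr in Hsc.
  assert (He : exp a <> 0) by apply Rgt_not_eq, exp_pos.
  f_equal; try (field; exact He);
    transitivity (sin b * sin b + cos b * cos b); (field; exact He) || lra.
Qed.

Lemma mapply_mmul A B z : mapply (mmul A B) z = mapply A (mapply B z).
Proof.
  destruct A as [[a1 a2] [a3 a4] [a5 a6] [a7 a8]], B as [[b1 b2] [b3 b4] [b5 b6] [b7 b8]],
    z as [[z1 z2] [z3 z4]].
  unfold mapply, mmul, Cplus, Cmult; cbn [fst snd m11 m12 m21 m22].
  f_equal; apply injective_projections; cbn [fst snd]; ring.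
Qed.

Lemma mapply_linear A (al be : R) z w :
  mapply A (spadd (spscal al z) (spscal be w)) =
  spadd (spscal al (mapply A z)) (spscal be (mapply A w)).
Proof.
  destruct A as [[a1 a2] [a3 a4] [a5 a6] [a7 a8]], z as [[z1 z2] [z3 z4]],
    w as [[w1 w2] [w3 w4]].
  unfold mapply, spadd, spscal, Cplus, Cmult, RtoC; cbn [fst snd m11 m12 m21 m22].
  f_equal; apply injective_projections; cbn [fst snd]; ring.
Qed.

Lemma mapply_mid z : mapply mid z = z.
Proof. destruct z as [[a b] [c d]]; rewrite mid_rM, mapply_rM; f_equal; f_equal; ring. Qed.

Lemma mapply_spzero A : mapply A spzero = spzero.
Proof.
  destruct A as [[a1 a2] [a3 a4] [a5 a6] [a7 a8]].
  unfold mapply, spzero, Cplus, Cmult, RtoC; cbn [fst snd m11 m12 m21 m22].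
  f_equal; apply injective_projections; cbn [fst snd]; ring.
Qed.

Definition dlam (l : R) (p : pt) (mu : nat) : R :=
  match mu with 0%nat => 0 | _ => exp (lam l p) * coord p mu / l ^ 2 end.

Lemma one_minus_pos l p : 0 < l -> inM l p -> 0 < 1 - rsq p / l ^ 2.
Proof.
  unfold inM; intros hl H; assert (0 < l ^ 2) by nra.
  apply Rlt_0_minus, (Rmult_lt_reg_r (l ^ 2)); auto; field_simplify; lra.
Qed.

Lemma exp_lam l p : 0 < l -> inM l p -> exp (lam l p) = 2 / (1 - rsq p / l ^ 2).
Proof.
  intros hl H; pose proof (one_minus_pos l p hl H).
  unfold lam; rewrite exp_ln; auto; apply Rdiv_lt_0_compat; lra.
Qed.

Lemma exp_kap l p : exp (kap l p) = / exp (lam l p).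
Proof. unfold kap; apply exp_Ropp. Qed.

Lemma upd_coord p mu : upd p mu (coord p mu) = p.
Proof. destruct p as [[t x] y]; destruct mu as [|[|mu]]; reflexivity. Qed.

Lemma lam_derive l p mu : 0 < l -> inM l p ->
  is_derive (fun s => lam l (upd p mu s)) (coord p mu) (dlam l p mu).
Proof.
  intros hl H; pose proof (one_minus_pos l p hl H) as W.
  unfold dlam; rewrite (exp_lam l p hl H).
  destruct p as [[t x] y]; unfold inM, lam, rsq in *; simpl in *.
  destruct mu as [|[|mu]]; simpl; auto_derive; try (field; split; nra);
    repeat split; try lra; apply Rdiv_lt_0_compat; lra.
Qed.

Lemma exp_lam_derive c l p mu : 0 < l -> inM l p ->
  is_derive (fun s => exp (c * lam l (upd p mu s))) (coord p mu)
            (c * dlam l p mu * exp (c * lam l p)).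
Proof.
  intros hl H.
  pose proof (is_derive_comp exp _ _ _ _ (is_derive_exp _)
                (is_derive_scal _ _ c _ (lam_derive l p mu hl H))) as D.
  simpl in D; rewrite upd_coord in D; exact D.
Qed.

Lemma Derive_exp_lam c l p mu : 0 < l -> inM l p ->
  Derive (fun s => exp (c * lam l (upd p mu s))) (coord p mu)
  = c * dlam l p mu * exp (c * lam l p).
Proof. intros hl H; apply is_derive_unique, exp_lam_derive; auto. Qed.

Lemma pd_eB l p mu nu a : 0 < l -> inM l p ->
  pd mu (fun q => eB l q nu a) p = eB l p nu a * dlam l p mu.
Proof.
  intros hl H; unfold pd, eB.
  destruct ((1 <=? nu)%nat && (nu <=? 2)%nat && Nat.eqb nu a)%bool.
  - rewrite (Derive_ext _ (fun s => exp (1 * lam l (upd p mu s))))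
      by (intros; now rewrite Rmult_1_l).
    rewrite (Derive_exp_lam 1 l p mu hl H), !Rmult_1_l; ring.
  - rewrite Derive_const; ring.
Qed.

Lemma pd_tauB l p mu nu : 0 < l -> inM l p ->
  pd mu (fun q => tauB l q nu) p = - tauB l p nu * dlam l p mu.
Proof.
  intros hl H; unfold pd, tauB, kap; destruct nu as [|nu].
  - rewrite (Derive_ext _ (fun s => exp (-1 * lam l (upd p mu s))))
      by (intros; f_equal; ring).
    rewrite (Derive_exp_lam (-1) l p mu hl H).
    replace (-1 * lam l p) with (- lam l p) by ring; ring.
  - rewrite Derive_const; ring.
Qed.

(* Since phi = e^{-kappa}, the mass one-form is m = dt, hence constant. *)
Lemma mB_dt l q nu : mB l q nu = match nu with 0%nat => 1 | _ => 0 end.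
Proof.
  destruct nu; simpl; auto; unfold phiB.
  rewrite exp_Ropp; field; apply Rgt_not_eq, exp_pos.
Qed.

Lemma pd_mB l p mu nu : pd mu (fun q => mB l q nu) p = 0.
Proof.
  unfold pd; rewrite (Derive_ext _ (fun _ => match nu with 0%nat => 1 | _ => 0 end)).
  - apply Derive_const.
  - intros; apply mB_dt.
Qed.

Lemma pdC_scal (f : pt -> R) (w : C) mu p d :
  is_derive (fun s => f (upd p mu s)) (coord p mu) d ->
  pdC mu (fun q => Cmult (RtoC (f q)) w) p = Cmult (RtoC d) w.
Proof.
  intros D; destruct w as [a b]; unfold pdC, pd, Cmult, RtoC; cbn [fst snd].
  rewrite (Derive_ext _ (fun s => f (upd p mu s) * a)) by (intros; ring).
  rewrite (Derive_ext (fun s => _ * b + _) (fun s => f (upd p mu s) * b)) by (intros; ring).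
  rewrite !Derive_scal_l, (is_derive_unique (fun s : R => f (upd p mu s)) _ _ D).
  f_equal; ring.
Qed.

Lemma pdSp_scal (f : pt -> R) c mu p d :
  is_derive (fun s => f (upd p mu s)) (coord p mu) d ->
  pdSp mu (fun q => spscal (f q) c) p = spscal d c.
Proof. intros D; unfold pdSp, spscal; cbn [fst snd]; f_equal; now apply pdC_scal. Qed.

Lemma pdSp_ext (z z' : pt -> Sp) mu p : (forall q, z q = z' q) -> pdSp mu z p = pdSp mu z' p.
Proof.
  intros Hz; unfold pdSp, pdC, pd.
  f_equal; f_equal; apply Derive_ext; intros; now rewrite Hz.
Qed.

Lemma exp_half_kap_derive l p mu : 0 < l -> inM l p ->
  is_derive (fun s => exp (kap l (upd p mu s) / 2)) (coord p mu)
            (- dlam l p mu / 2 * exp (kap l p / 2)).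
Proof.
  intros hl H; unfold kap.
  replace (- dlam l p mu / 2 * exp (- lam l p / 2))
    with (-1/2 * dlam l p mu * exp (-1/2 * lam l p))
    by (replace (-1/2 * lam l p) with (- lam l p / 2) by field; field).
  apply (is_derive_ext (fun s => exp (-1/2 * lam l (upd p mu s)))).
  - intros; f_equal; field.
  - now apply exp_lam_derive.
Qed.

Section Geometry.
Variables (l : R) (hl : 0 < l) (tauI : pt -> nat -> R) (eI : pt -> nat -> nat -> R).
Hypothesis Hinv : forall p, inM l p -> projective_inverse (tauB l) (eB l) tauI eI p.

Lemma inverse_fields p : inM l p ->
  tauI p 0%nat = exp (lam l p) /\ tauI p 1%nat = 0 /\ tauI p 2%nat = 0 /\
  eI p 0%nat 1%nat = 0 /\ eI p 0%nat 2%nat = 0 /\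
  eI p 1%nat 1%nat = / exp (lam l p) /\ eI p 1%nat 2%nat = 0 /\
  eI p 2%nat 1%nat = 0 /\ eI p 2%nat 2%nat = / exp (lam l p).
Proof.
  intros H; destruct (Hinv p H) as [h1 [h2 [h3 h4]]].
  pose proof (h2 1%nat ltac:(auto)) as h21; pose proof (h2 2%nat ltac:(auto)) as h22.
  pose proof (h3 1%nat ltac:(auto)) as h31; pose proof (h3 2%nat ltac:(auto)) as h32.
  pose proof (h4 1%nat 1%nat ltac:(auto) ltac:(auto)) as h411.
  pose proof (h4 1%nat 2%nat ltac:(auto) ltac:(auto)) as h412.
  pose proof (h4 2%nat 1%nat ltac:(auto) ltac:(auto)) as h421.
  pose proof (h4 2%nat 2%nat ltac:(auto) ltac:(auto)) as h422.
  clear h2 h3 h4.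
  unfold sumM, tauB, eB, delta in *; simpl in *; rewrite exp_kap in *.
  set (E := exp (lam l p)) in *.
  assert (HE : E <> 0) by apply Rgt_not_eq, exp_pos.
  rewrite ?Rmult_0_r, ?Rplus_0_l, ?Rplus_0_r in *.
  (* each unknown x now occurs in exactly one equation x * c = k *)
  repeat split; match goal with
  | |- ?x = _ => match goal with h : x * ?c = _ |- _ =>
      apply (Rmult_eq_reg_r c); [rewrite h; field; exact HE | ]
    end
  end; auto using Rinv_neq_0_compat.
Qed.

Ltac inverse_values p H :=
  destruct (inverse_fields p H) as (t0 & t1 & t2 & e01 & e02 & e11 & e12 & e21 & e22);
  assert (HE : exp (lam l p) <> 0) by apply Rgt_not_eq, exp_pos;
  assert (Hl : l <> 0) by lra.

Lemma omega1_zero p mu a : inM l p -> (a = 1 \/ a = 2)%nat ->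
  omega1 (tauB l) (eB l) (mB l) tauI eI p mu a = 0.
Proof.
  intros H Ha; inverse_values p H.
  unfold omega1, dAm, dAe, sumM, sumF; rewrite !pd_mB, !(pd_eB l p) by auto.
  rewrite t1, t2.
  destruct Ha as [-> | ->]; destruct mu as [|[|[|mu]]];
    unfold eB, tauB; simpl; unfold Rdiv; ring.
Qed.

Definition rotation (p : pt) (mu a b : nat) : R :=
  (if Nat.eqb mu a then dlam l p b else 0) - (if Nat.eqb mu b then dlam l p a else 0).

Lemma omega2_value p mu a b : inM l p -> (mu <= 2)%nat ->
  (a = 1 \/ a = 2)%nat -> (b = 1 \/ b = 2)%nat ->
  omega2 (tauB l) (eB l) (mB l) eI p mu a b = rotation p mu a b.
Proof.
  intros H Hmu Ha Hb; inverse_values p H.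
  unfold omega2, dAe, dAm, sumM, sumF; rewrite !(pd_eB l p), !pd_mB by auto.
  assert (mu = 0 \/ mu = 1 \/ mu = 2)%nat as [-> | [-> | ->]] by lia;
    destruct Ha as [-> | ->]; destruct Hb as [-> | ->];
    rewrite ?e01, ?e02, ?e11, ?e12, ?e21, ?e22;
    unfold rotation, tauB, eB; simpl; field; auto.
Qed.

Lemma tauFF_zero p a b : inM l p -> (a = 1 \/ a = 2)%nat -> (b = 1 \/ b = 2)%nat ->
  tauFF (tauB l) eI p a b = 0.
Proof.
  intros H Ha Hb; inverse_values p H.
  unfold tauFF, tauF, dAtau, sumM; rewrite !(pd_tauB l p) by auto.
  destruct Ha as [-> | ->]; destruct Hb as [-> | ->];
    rewrite ?e01, ?e02, ?e11, ?e12, ?e21, ?e22; unfold tauB; simpl; unfold Rdiv; ring.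
Qed.

Lemma tau0F_value p a : inM l p -> (a = 1 \/ a = 2)%nat ->
  tau0F (tauB l) tauI eI p a = coord p a / l ^ 2.
Proof.
  intros H Ha; inverse_values p H.
  unfold tau0F, tauF, dAtau, sumM; rewrite !(pd_tauB l p) by auto.
  destruct Ha as [-> | ->]; rewrite t0, t1, t2, ?e01, ?e02, ?e11, ?e12, ?e21, ?e22;
    unfold tauB, dlam; rewrite exp_kap; simpl; field; auto.
Qed.

Lemma tau0M_value p mu : inM l p -> tau0M (tauB l) tauI p mu = dlam l p mu.
Proof.
  intros H; inverse_values p H.
  unfold tau0M, tauF, dAtau, sumM; rewrite !(pd_tauB l p) by auto.
  rewrite t0, t1, t2.
  destruct mu as [|[|mu]]; unfold tauB, dlam; rewrite ?exp_kap; simpl; field; auto.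
Qed.

Variable vv : pt -> nat -> R.
Hypothesis Hv0 : forall p, inM l p -> sumM (fun mu => tauI p mu * vv p mu) = 0.
Hypothesis HvF : forall p a, inM l p -> (a = 1 \/ a = 2)%nat ->
  sumM (fun mu => eI p mu a * vv p mu) = vFB l p a.

Lemma vv_values p : inM l p ->
  vv p 0%nat = 0 /\ vv p 1%nat = exp (lam l p) * vFB l p 1 /\
  vv p 2%nat = exp (lam l p) * vFB l p 2.
Proof.
  intros H; inverse_values p H.
  pose proof (Hv0 p H) as h0; pose proof (HvF p 1%nat H ltac:(auto)) as h1;
    pose proof (HvF p 2%nat H ltac:(auto)) as h2.
  unfold sumM in h0, h1, h2.
  rewrite t0, t1, t2 in h0; rewrite e01, e11, e21 in h1; rewrite e02, e12, e22 in h2.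
  repeat split.
  - apply (Rmult_eq_reg_l (exp (lam l p))); auto; lra.
  - rewrite <- h1; field; auto.
  - rewrite <- h2; field; auto.
Qed.

Lemma conformal_spinor_solves (z : pt -> Sp) c p : inM l p ->
  (forall q, z q = spscal (exp (kap l q / 2)) c) ->
  Splus (tauB l) (eB l) (mB l) tauI eI vB uB vv z p.
Proof.
  intros H Hz.
  assert (HE : exp (lam l p) <> 0) by apply Rgt_not_eq, exp_pos.
  assert (Hl : l <> 0) by lra.
  destruct (vv_values p H) as (v0 & v1 & v2).
  unfold Splus, msumF; cbv beta zeta.
  rewrite (Hv0 p H), (HvF p 1%nat H (or_introl eq_refl)), (HvF p 2%nat H (or_intror eq_refl)).
  split; [|split; [|split]].
  -
    unfold sumF; rewrite !tauFF_zero by auto; unfold vB, eps.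
    spinor_components (z p); ring.
  - (* 3/2 tau^{a0} gamma_{a0} = gamma^a v_a, and u = 0 *)
    rewrite !tau0F_value by auto; unfold uB, vFB.
    spinor_components (z p); field; auto.
  -
    intros mu _; rewrite !omega1_zero by auto.
    spinor_components (z p); ring.
  - (* d_mu e^{kappa/2} = -(1/2) d_mu lambda e^{kappa/2} matches the right-hand side *)
    intros mu Hmu; unfold Dcov.
    rewrite (pdSp_ext z (fun q => spscal (exp (kap l q / 2)) c)) by exact Hz.
    rewrite (pdSp_scal _ _ _ _ _ (exp_half_kap_derive l p mu hl H)), spscal_mult, <- Hz.
    unfold msumF; cbv beta; rewrite !omega2_value, tau0M_value by auto.
    assert (mu = 0 \/ mu = 1 \/ mu = 2)%nat as [-> | [-> | ->]] by lia;
      unfold rotation, eB, tauB; cbn [Nat.eqb Nat.leb andb]; rewrite ?v0, ?v1, ?v2;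
      unfold uB, vFB, dlam; cbn [coord];
      spinor_components (z p); field; auto.
Qed.
End Geometry.

Lemma zetaPlus_conformal l z0 q :
  zetaPlus l z0 q = spscal (exp (kap l q / 2)) (mapply (expG 0 (PI / 8)) z0).
Proof.
  destruct z0 as [[a b] [c d]]; unfold zetaPlus.
  rewrite !expG_rM, exp_0, !mapply_rM, spscal_pair; f_equal; f_equal; ring.
Qed.

(* exp(kappa/2 + pi/8 gamma_0) is real, so it preserves the Majorana condition. *)
Lemma zetaPlus_majorana l z0 p : majorana z0 -> majorana (zetaPlus l z0 p).
Proof.
  destruct z0 as [[a b] [c d]]; rewrite !majorana_iff; cbn [fst snd]; intros [-> ->].
  unfold zetaPlus; rewrite expG_rM, mapply_rM; cbn [fst snd]; split; ring.
Qed.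

(* ... and invertible, so zeta_+ vanishes nowhere unless zeta_0 = 0 ... *)
Lemma zetaPlus_vanishes l z0 p : zetaPlus l z0 p = spzero -> z0 = spzero.
Proof.
  unfold zetaPlus; intros Hz.
  rewrite <- (mapply_mid z0), <- (expG_inverse (kap l p / 2) (PI / 8)), mapply_mmul, Hz.
  apply mapply_spzero.
Qed.

Lemma zetaPlus_linear l (al be : R) z0 z1 p :
  spadd (spscal al (zetaPlus l z0 p)) (spscal be (zetaPlus l z1 p)) =
  zetaPlus l (spadd (spscal al z0) (spscal be z1)) p.
Proof. unfold zetaPlus; now rewrite mapply_linear. Qed.

Theorem mainTheorem6 (l : R) (hl : 0 < l)
  (tauI : pt -> nat -> R) (eI : pt -> nat -> nat -> R) (vv : pt -> nat -> R)
  (Hinv : forall p, inM l p -> projective_inverse (tauB l) (eB l) tauI eI p)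
  (Hv0 : forall p, inM l p -> sumM (fun mu => tauI p mu * vv p mu) = 0)
  (HvF : forall p a, inM l p -> (a = 1 \/ a = 2)%nat ->
           sumM (fun mu => eI p mu a * vv p mu) = vFB l p a) :
  (* the boost connection vanishes identically *)
  (forall p mu a, inM l p -> (mu <= 2)%nat -> (a = 1 \/ a = 2)%nat ->
     omega1 (tauB l) (eB l) (mB l) tauI eI p mu a = 0) /\
  (* every constant Majorana zeta_0 <> 0 gives a nowhere-vanishing Majorana solution *)
  (forall z0 : Sp, majorana z0 -> z0 <> spzero ->
     forall p, inM l p ->
       majorana (zetaPlus l z0 p) /\ zetaPlus l z0 p <> spzero /\
       Splus (tauB l) (eB l) (mB l) tauI eI vB uB vv (zetaPlus l z0) p) /\
  (* two of these solutions are linearly independent *)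
  (exists z0 z1 : Sp, majorana z0 /\ majorana z1 /\ z0 <> spzero /\ z1 <> spzero /\
     forall alpha beta : R,
       (forall p, inM l p ->
          spadd (spscal alpha (zetaPlus l z0 p)) (spscal beta (zetaPlus l z1 p)) = spzero) ->
       alpha = 0 /\ beta = 0).
Proof.
  split; [|split].
  - intros p mu a H _ Ha; now apply (omega1_zero l hl tauI eI Hinv).
  - intros z0 Hmaj Hnz p H; split; [|split].
    + now apply zetaPlus_majorana.
    + intros Hz; exact (Hnz (zetaPlus_vanishes l z0 p Hz)).
    + eapply (conformal_spinor_solves l hl tauI eI Hinv vv Hv0 HvF _ _ p H).
      intros q; apply zetaPlus_conformal.
  - (* the two real basis spinors, tested at the centre of the disc *)
    exists ((RtoC 1, RtoC 0) : Sp), ((RtoC 0, RtoC 1) : Sp).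
    assert (Hc : inM l (0, 0, 0)) by (unfold inM, rsq; simpl; nra).
    assert (Hreal : forall x y : R, majorana ((RtoC x, RtoC y) : Sp))
      by (intros; apply majorana_iff; split; reflexivity).
    split; [apply Hreal|]; split; [apply Hreal|].
    split; [intros Hz; injection Hz; lra|]; split; [intros Hz; injection Hz; lra|].
    intros al be Hab; specialize (Hab _ Hc).
    rewrite zetaPlus_linear in Hab; apply zetaPlus_vanishes in Hab.
    unfold spadd, spscal, Cplus, Cmult, RtoC, spzero in Hab; cbn [fst snd] in Hab.
    injection Hab; intros; lra.
Qed.
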